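(* Let $\mathcal{C}$ be the class of all generalized Petersen graphs $\mathrm{Pet}(n,k)$ ($2<2k\le n$) satisfying at least one of: (a) $k$ is even, $n$ is odd and $n\equiv\pm2\pmod{k-1}$; (b) $n$ and $k$ are both odd and $n\ge 5k$. Then $\mathcal{C}$ is odd-pentagonal.
   Context: For integers $n,k$ with $2<2k\le n$, the generalized Petersen graph $\mathrm{Pet}(n,k)$ has vertex set $\{u_0,\dots,u_{n-1}\}\cup\{v_0,\dots,v_{n-1}\}$ and edge set $\{u_iu_{i+1}\}\cup\{u_iv_i\}\cup\{v_iv_{i+k}\}$, indices modulo $n$. A class $\mathcal{G}$ of simple graphs is odd-girth-closed if for every positive integer $g$ there is a graph in $\mathcal{G}$ whose odd girth (length of a shortest odd cycle) is at least $g$. An odd-girth-closed class $\mathcal{G}$ is odd-pentagonal if there is a positive integer $g^*$ such that every graph in $\mathcal{G}$ with odd girth greater than $g^*$ admits a homomorphism to the 5-cycle $C_5$. *)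

From mathcomp Require Import all_boot.
Set Implicit Arguments. Unset Strict Implicit. Unset Printing Implicit Defensive.

Record graph := Graph { gV : finType; gE : rel gV }.

Definition has_cycle (G : graph) (l : nat) : Prop :=
  exists s : seq (gV G), [/\ 3 <= l, size s = l, uniq s & cycle (@gE G) s].

Definition odd_girth_ge (G : graph) (g : nat) : Prop :=
  forall l, odd l -> has_cycle G l -> g <= l.

Definition C5_adj : rel 'I_5 :=
  fun a b => (val b == (val a).+1 %% 5) || (val a == (val b).+1 %% 5).

Definition hom_to_C5 (G : graph) : Prop :=
  exists f : gV G -> 'I_5, forall x y, gE x y -> C5_adj (f x) (f y).

Definition graph_class := graph -> Prop.

Definition odd_girth_closed (C : graph_class) : Prop :=
  forall g : nat, g > 0 -> exists G, C G /\ odd_girth_ge G g.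

Definition odd_pentagonal (C : graph_class) : Prop :=
  odd_girth_closed C /\
  exists gs : nat, 0 < gs /\
    forall G, C G -> odd_girth_ge G gs.+1 -> hom_to_C5 G.

(* Generalized Petersen graph Pet(n,k): vertices (false, i) = u_i and
   (true, i) = v_i, i in 'I_n; edges u_i u_{i+1}, u_i v_i, v_i v_{i+k}. *)
Definition pet_adj (n k : nat) : rel (bool * 'I_n) :=
  fun x y =>
    match x, y with
    | (false, i), (false, j) =>
        (val j == (val i).+1 %% n) || (val i == (val j).+1 %% n)
    | (false, i), (true, j) | (true, i), (false, j) => val i == val j
    | (true, i), (true, j) =>
        (val j == (val i + k) %% n) || (val i == (val j + k) %% n)
    end.

Definition Pet (n k : nat) : graph := Graph (@pet_adj n k).

Definition classC : graph_class :=
  fun G => exists n k : nat,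
    [/\ 2 < 2 * k, 2 * k <= n,
        (~~ odd k && odd n &&
           ((n %% (k - 1) == 2 %% (k - 1)) || ((n + 2) %% (k - 1) == 0)))
        || (odd n && odd k && (5 * k <= n))
      & G = Pet n k].

(* Sending u_x to x - 2 floor(x M / n) and v_x to x - 2 floor(x M / n) + 1
   (mod L) is a homomorphism from Pet(n, k) to the cycle C_L as soon as n = 2 M
   and k = 2 e + 1 (mod L) and n e <= k M <= n (e + 1): a rim edge moves the residue
   by +1 or -1, and a spoke x -> x + k moves it by k - 2 e or k - 2 (e + 1).
   A homomorphism into C_L forces odd girth at least L, since a closed walk
   maps to a closed walk on C_L whose numbers of forward and backward steps
   differ by a multiple of L.  Pet(3 L, 3) -> C_L shows the class is odd-girth
   closed; in the class, odd girth at least 14 rules out even k <= 10 through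
   the (k + 3)-cycle v_0 v_k u_k ... u_0, and in each remaining case the
   parameters M, e can be chosen with L = 5. *)

From mathcomp Require Import all_boot zify.
Set Implicit Arguments. Unset Strict Implicit. Unset Printing Implicit Defensive.

Definition cycle_adj (L a b : nat) : bool :=
  (b == a.+1 %[mod L]) || (a == b.+1 %[mod L]).

Definition cycle_hom (G : graph) (L : nat) (F : gV G -> nat) : Prop :=
  forall x y, gE x y -> cycle_adj L (F x) (F y).

Lemma cycle_adjC L a b : cycle_adj L a b = cycle_adj L b a.
Proof. by rewrite /cycle_adj orbC. Qed.

Lemma eqn_modS L a b : (a.+1 == b.+1 %[mod L]) = (a == b %[mod L]).
Proof. by rewrite -addn1 -[b.+1]addn1 eqn_modDr. Qed.

Lemma cycle_adjSS L a b : cycle_adj L a.+1 b.+1 = cycle_adj L a b.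
Proof. by rewrite /cycle_adj !eqn_modS. Qed.

Lemma cycle_adj_mod L a a' b b' : a = a' %[mod L] -> b = b' %[mod L] ->
  cycle_adj L a b = cycle_adj L a' b'.
Proof.
have modS x y : x = y %[mod L] -> x.+1 = y.+1 %[mod L].
  by move/eqP; rewrite -eqn_modS => /eqP.
by move=> Ea Eb; rewrite /cycle_adj Ea Eb (modS _ _ Ea) (modS _ _ Eb).
Qed.

Lemma eqn_mod_addMr L a b t : a = b + t * L -> a = b %[mod L].
Proof. by move=> ->; rewrite addnC modnMDl. Qed.

Lemma path_residue (T : finType) (e : rel T) (F : T -> nat) L :
    (forall x y, e x y -> cycle_adj L (F x) (F y)) ->
  forall p x, path e x p ->
  exists P Q, P + Q = size p /\ F (last x p) + Q = F x + P %[mod L].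
Proof.
move=> homF; elim=> [|y p IHp] x /=; first by exists 0, 0.
case/andP=> /homF exy /IHp [P [Q [sizePQ resPQ]]].
case/orP: exy => /eqP Fy.
- exists P.+1, Q; split; first by rewrite addSn sizePQ.
  by rewrite resPQ -modnDml Fy modnDml addSnnS.
- exists P, Q.+1; split; first by rewrite addnS sizePQ.
  rewrite addnS -modnDml Fy modnDml addSn; apply/eqP; rewrite eqn_modS.
  exact/eqP.
Qed.

Lemma cycle_hom_odd_girth G L (F : gV G -> nat) : cycle_hom L F -> odd_girth_ge G L.
Proof.
move=> homF l odd_l [[|x p] [l_ge3 size_l _ cyc]]; first by rewrite -size_l in l_ge3.
have [P [Q []]] := path_residue homF cyc.
rewrite last_rcons size_rcons => sizePQ /eqP; rewrite eqn_modDl => resPQ.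
have {}sizePQ : P + Q = l by rewrite sizePQ -size_l.
case: (ltngtP P Q) => [ltPQ|ltQP|eqPQ].
- move: resPQ; rewrite eqn_mod_dvd; last exact: ltnW.
  by move=> /dvdn_leq; rewrite subn_gt0 => /(_ ltPQ); lia.
- move: resPQ; rewrite eq_sym eqn_mod_dvd; last exact: ltnW.
  by move=> /dvdn_leq; rewrite subn_gt0 => /(_ ltQP); lia.
- by move: odd_l; rewrite -sizePQ eqPQ addnn odd_double.
Qed.

Lemma cycle_hom_C5 G (F : gV G -> nat) : cycle_hom 5 F -> hom_to_C5 G.
Proof.
move=> homF; exists (fun x => Ordinal (ltn_pmod (F x) (isT : 0 < 5))) => x y /homF.
have modS a : (a %% 5).+1 %% 5 = a.+1 %% 5 by rewrite -addn1 modnDml addn1.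
by rewrite /C5_adj /cycle_adj /= !modS.
Qed.

Lemma divnD_bounds n a b : 0 < n ->
  exists d, [/\ (a + b) %/ n = a %/ n + d, n * d < b + n & b < n * d + n].
Proof.
move=> n_gt0; exists ((a + b) %/ n - a %/ n).
move: (divn_eq a n) (divn_eq (a + b) n) (ltn_pmod a n_gt0) (ltn_pmod (a + b) n_gt0).
move: (leq_div2r n (leq_addr b a)).
move: (a %/ n) ((a + b) %/ n) (a %% n) ((a + b) %% n) => qa qb ra rb le_q Ea Eab lt_ra lt_rb.
have [d Eqb] : exists d, qb = qa + d by exists (qb - qa); lia.
subst qb; rewrite mulnDl in Eab; rewrite addKn; split=> //; lia.
Qed.

Section PetersenToCycle.

Variables (n k L M t c e : nat).
Hypothesis k_lt_n : k < n.
Hypothesis n_eq : n = t * L.+1 + 2 * M.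
Hypothesis k_eq : k = 2 * e + c * L.+1 + 1.
Hypothesis kM_ge : n * e <= k * M.
Hypothesis kM_le : k * M <= n * e.+1.

(* Modulo [L.+1], [2 * L] is [-2]: the level drops by 2 whenever [x M / n]
   crosses an integer. *)
Definition pet_level (x : nat) : nat := x + 2 * L * (x * M %/ n).

Let n_gt0 : 0 < n. Proof. exact: leq_ltn_trans k_lt_n. Qed.

Lemma pet_level_succ x : cycle_adj L.+1 (pet_level x) (pet_level x.+1).
Proof.
have [d [Ed lt_n _]] := divnD_bounds (x * M) M n_gt0.
have d_le1 : d <= 1 by rewrite -ltnS -(ltn_pmul2l n_gt0); lia.
rewrite /pet_level -[x.+1]addn1 mulnDl mul1n Ed /cycle_adj.
move: (x * M %/ n) => f; case: d d_le1 {Ed lt_n} => [|[|//]] _.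
- by apply/orP; left; apply/eqP; congr (_ %% _); lia.
- apply/orP; right; apply/eqP; apply: esym (eqn_mod_addMr (t := 2) _); lia.
Qed.

Lemma pet_level_wrap : cycle_adj L.+1 (pet_level n.-1) (pet_level 0).
Proof.
rewrite /cycle_adj /pet_level mul0n div0n muln0 addn0.
case: M n_eq => [|M'] En.
- apply/orP; left; apply/eqP; rewrite muln0 div0n muln0.
  apply: esym (eqn_mod_addMr (t := t) _); lia.
- have -> : n.-1 * M'.+1 %/ n = M'.
    have -> : n.-1 * M'.+1 = M' * n + (n - M'.+1) by rewrite En; lia.
    by rewrite divnMDl // divn_small ?addn0 //; lia.
  apply/orP; right; apply/eqP; apply: (eqn_mod_addMr (t := t + 2 * M')); lia.
Qed.

Lemma pet_level_addn x : pet_level (x + n) = pet_level x %[mod L.+1].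
Proof.
rewrite /pet_level mulnDl [n * M]mulnC divnDr ?dvdn_mull // mulnK //.
apply: (eqn_mod_addMr (t := t + 2 * M)); lia.
Qed.

Lemma pet_level_addk x : cycle_adj L.+1 (pet_level x) (pet_level (x + k)).
Proof.
have [d [Ed lt_kM lt_nd]] := divnD_bounds (x * M) (k * M) n_gt0.
have e_le_d : e <= d by rewrite -ltnS -(ltn_pmul2l n_gt0); lia.
have d_le_e1 : d <= e.+1 by rewrite -ltnS -(ltn_pmul2l n_gt0); lia.
rewrite /pet_level /cycle_adj mulnDl Ed; move: (x * M %/ n) => f.
have [->|->] : d = e \/ d = e.+1 by lia.
- apply/orP; left; apply/eqP; apply: (eqn_mod_addMr (t := 2 * e + c)); lia.
- apply/orP; right; apply/eqP.
  apply: esym (eqn_mod_addMr (t := 2 * e.+1 + c) _); lia.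
Qed.

Lemma pet_level_spoke (i j : 'I_n) : val j = (val i + k) %% n ->
  cycle_adj L.+1 (pet_level i) (pet_level j).
Proof.
move=> Ej; have [lt_ikn|le_nik] := ltnP (val i + k) n.
  by rewrite Ej modn_small //; exact: pet_level_addk.
have Eij : val i + k = val j + n.
  have lt_in : val i < n := ltn_ord i.
  by rewrite Ej -{2}[val i + k](subnK le_nik) modnDr modn_small; lia.
by rewrite -(cycle_adj_mod (erefl _) (pet_level_addn j)) -Eij pet_level_addk.
Qed.

Lemma pet_level_rim (i j : 'I_n) : val j = (val i).+1 %% n ->
  cycle_adj L.+1 (pet_level i) (pet_level j).
Proof.
move=> Ej; have [lt_in|le_ni] := ltnP (val i).+1 n.
  by rewrite Ej modn_small // pet_level_succ.
have Ei : nat_of_ord i = n.-1 by move: le_ni (ltn_ord i) => /=; lia.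
have Ej0 : nat_of_ord j = 0 by rewrite Ej /= Ei prednK // modnn.
by rewrite Ei Ej0 pet_level_wrap.
Qed.

Lemma pet_cycle_hom :
  cycle_hom L.+1 (fun v : gV (Pet n k) => pet_level v.2 + v.1).
Proof.
case=> [[|] i] [[|] j]; rewrite /= ?addn0 ?addn1.
- by case/orP=> /eqP Ej; [|rewrite cycle_adjC]; rewrite cycle_adjSS pet_level_spoke.
- by move=> /eqP/val_inj->; rewrite /cycle_adj eqxx orbT.
- by move=> /eqP/val_inj->; rewrite /cycle_adj eqxx.
- by case/orP=> /eqP Ej; [|rewrite cycle_adjC]; rewrite pet_level_rim.
Qed.

End PetersenToCycle.

Lemma pet_triple_odd_girth L : 0 < L -> odd_girth_ge (Pet (3 * L.+1) 3) L.+1.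
Proof.
move=> L_gt0; apply: cycle_hom_odd_girth
  (pet_cycle_hom (M := L.+1) (t := 1) (c := 0) (e := 1) _ _ _ _ _); lia.
Qed.

Lemma pet_hom_C5_even_plus n k e q : k = 2 * e + 6 -> n = q * (2 * e + 5) + 2 ->
  k < n -> hom_to_C5 (Pet n k).
Proof.
move=> k_eq n_eq lt_kn.
apply: cycle_hom_C5
  (pet_cycle_hom (L := 4) (M := q * e + 1) (t := q) (c := 1) (e := e) _ _ _ _ _) => //.
- lia.
- lia.
- rewrite n_eq k_eq; nia.
- rewrite n_eq k_eq; nia.
Qed.

Lemma pet_hom_C5_even_minus n k e q : 2 <= e -> k = 2 * e + 6 ->
  n + 2 = q * (2 * e + 5) -> 2 * k <= n -> hom_to_C5 (Pet n k).
Proof.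
move=> e_ge2 k_eq n_eq le_2k_n.
have q_ge3 : 3 <= q by nia.
have qe_ge6 : 6 <= q * e by nia.
apply: cycle_hom_C5
  (pet_cycle_hom (L := 4) (M := q * e - 1) (t := q) (c := 1) (e := e) _ _ _ _ _).
- lia.
- nia.
- lia.
- nia.
- nia.
Qed.

Lemma pet_hom_C5_even n k : ~~ odd k -> 10 < k -> 2 * k <= n ->
  (n %% (k - 1) == 2 %% (k - 1)) || ((n + 2) %% (k - 1) == 0) ->
  hom_to_C5 (Pet n k).
Proof.
move=> even_k k_gt10 le_2k_n.
have [e k_eq] : exists e, k = 2 * e + 6.
  by exists (k./2 - 3); move: (odd_double_half k); rewrite (negbTE even_k); lia.
have -> : k - 1 = 2 * e + 5 by lia.
case/orP=> /eqP n_mod.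
- apply: (pet_hom_C5_even_plus (e := e) (q := n %/ (2 * e + 5))) => //; last lia.
  by rewrite {1}(divn_eq n (2 * e + 5)) n_mod modn_small //; lia.
- apply: (pet_hom_C5_even_minus (e := e) (q := (n + 2) %/ (2 * e + 5))) => //; first lia.
  by rewrite {1}(divn_eq (n + 2) (2 * e + 5)) n_mod addn0.
Qed.

Lemma pet_hom_C5_odd n k : odd n -> odd k -> 5 * k <= n -> hom_to_C5 (Pet n k).
Proof.
move=> odd_n odd_k le_5k_n.
have [e k_eq] : exists e, k = 2 * e + 1.
  by exists k./2; move: (odd_double_half k); rewrite odd_k; lia.
have [m n_eq] : exists m, n = 2 * m + 1.
  by exists n./2; move: (odd_double_half n); rewrite odd_n; lia.
apply: cycle_hom_C5
  (pet_cycle_hom (L := 4) (M := m - 2) (t := 1) (c := 0) (e := e) _ _ _ _ _).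
- lia.
- lia.
- lia.
- rewrite n_eq k_eq; nia.
- rewrite n_eq k_eq; nia.
Qed.

(* The cycle v_0 v_k u_k u_(k-1) ... u_0, listed through [u j = u_(k-j)]. *)
Lemma pet_has_cycle n k : 0 < k < n -> has_cycle (Pet n k) (k + 3).
Proof.
case: n => [|n] /andP[k_gt0 lt_kn] //.
have inordK' m : m <= k -> @inord n m = m :> nat by move=> le_mk; apply: inordK; lia.
pose u j : bool * 'I_n.+1 := (false, inord (k - j)).
have rim_path m j : j + m <= k -> path (@pet_adj n.+1 k) (u j) (map u (iota j.+1 m)).
  elim: m j => [|m IHm] j le_jmk //=.
  rewrite IHm ?andbT; last lia.
  by rewrite /pet_adj /= !inordK' ?(@modn_small (k - j.+1).+1); lia.
exists [:: (true, inord 0), (true, inord k) & map u (iota 0 k.+1)]; split.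
- lia.
- by rewrite /= size_map size_iota; lia.
- have spoke_notin j : (true, j) \notin map u (iota 0 k.+1) by apply/mapP=> -[].
  have u_inj : {in iota 0 k.+1 &, injective u}.
    move=> j1 j2; rewrite !mem_iota => /andP[_ lt_j1] /andP[_ lt_j2] [] /(congr1 val) /=.
    by rewrite !inordK'; lia.
  rewrite cons_uniq cons_uniq in_cons negb_or !spoke_notin (map_inj_in_uniq u_inj).
  by rewrite iota_uniq !andbT xpair_eqE /= -val_eqE /= !inordK' //; lia.
- have last_iota : last 0 (iota 1 k) = k.
    by rewrite -(prednK k_gt0) -[k.-1.+1]addn1 iotaD last_cat /= addnC.
  rewrite /cycle /= rcons_path rim_path // last_map last_iota /pet_adj /=.
  by rewrite !inordK' ?subn0 ?subnn ?add0n ?(modn_small lt_kn) ?eqxx.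
Qed.

Lemma pet_odd_girth_le n k g : 0 < k < n -> ~~ odd k ->
  odd_girth_ge (Pet n k) g -> g <= k + 3.
Proof.
move=> k_range even_k girth; apply: girth (pet_has_cycle k_range).
by rewrite oddD (negbTE even_k).
Qed.

Theorem corollary7 : odd_pentagonal classC.
Proof.
split.
  move=> g _; exists (Pet (3 * (2 * g + 4).+1) 3); split.
    exists (3 * (2 * g + 4).+1), 3; split=> //; first lia.
    by apply/orP; right; rewrite oddM !oddS oddD oddM; apply/andP; split; last lia.
  move=> l odd_l cyc.
  suff : (2 * g + 4).+1 <= l by lia.
  by apply: pet_triple_odd_girth odd_l cyc; lia.
exists 13; split=> // G [n [k [k_gt1 le_2k_n cond ->]]] girth.
case/orP: cond => [/andP[/andP[even_k _] n_mod] | /andP[/andP[odd_n odd_k] le_5k_n]].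
- have k_range : 0 < k < n by lia.
  have girth_le := pet_odd_girth_le k_range even_k girth.
  by apply: pet_hom_C5_even => //; lia.
- exact: pet_hom_C5_odd.
Qed.
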